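(* Let $M \subseteq \mathrm{Inj}(\Omega)$ be a normal submonoid. Then $M \cap \mathrm{Sym}(\Omega)$ is a normal subgroup of $\mathrm{Sym}(\Omega)$ (in particular it is closed under inverses).
   Context: $\Omega$ is a countably infinite set; $\mathrm{Inj}(\Omega)$ is the monoid of all injective maps $\Omega\to\Omega$ under composition and $\mathrm{Sym}(\Omega)$ the group of all permutations of $\Omega$. A subset of $\mathrm{Inj}(\Omega)$ is normal if it is closed under $f\mapsto afa^{-1}$ for all $a\in\mathrm{Sym}(\Omega)$. *)

From mathcomp Require Import all_boot.
Set Implicit Arguments. Unset Strict Implicit. Unset Printing Implicit Defensive.

(* Omega is modelled as a type T equipped with a bijection from nat. *)
Definition countably_infinite (T : Type) : Prop :=
  exists e : nat -> T, bijective e.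

Definition submonoid_Inj (T : Type) (M : (T -> T) -> Prop) : Prop :=
  [/\ (forall f, M f -> injective f),
      M id &
      (forall f g, M f -> M g -> M (f \o g))].

(* Normality: closed under f |-> a f a^{-1} for every permutation a
   (a permutation is given together with its two-sided inverse b = a^{-1}). *)
Definition normal_set (T : Type) (M : (T -> T) -> Prop) : Prop :=
  forall a b : T -> T, cancel a b -> cancel b a ->
    forall f, M f -> M (a \o f \o b).

Definition normal_subgroup_Sym (T : Type) (H : (T -> T) -> Prop) : Prop :=
  [/\ (forall f, H f -> bijective f),
      H id,
      (forall f g, H f -> H g -> H (f \o g)),
      (forall f g, H f -> cancel f g -> cancel g f -> H g) &
      normal_set H].

(* Every permutation f of a set is conjugate to its inverse, by an involution r
   that reflects each f-orbit: after choosing a base point c in an orbit, r sends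
   f^n c to f^-n c (well defined also on finite cycles).  Hence a normal set of
   maps containing f contains r f r^-1 = f^-1. *)
From Stdlib Require Import ZArith Lia ClassicalEpsilon FunctionalExtensionality
  PropExtensionality ProofIrrelevance.
From mathcomp Require Import all_boot.
Set Implicit Arguments. Unset Strict Implicit.

Section OrbitReflection.
Variables (T : Type) (f g : T -> T).
Hypotheses (fK : cancel f g) (gK : cancel g f).

Definition iterz (n : Z) (x : T) : T :=
  if (0 <=? n)%Z then iter (Z.to_nat n) f x else iter (Z.to_nat (- n)) g x.

Lemma iterz_succ n x : iterz (Z.succ n) x = f (iterz n x).
Proof.
rewrite /iterz; case: (Z.leb_spec 0 n) => n_ge0.
  have -> : (0 <=? Z.succ n)%Z = true by apply/Z.leb_le; lia.
  by have -> : Z.to_nat (Z.succ n) = (Z.to_nat n).+1 by lia.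
case: (Z.leb_spec 0 (Z.succ n)) => sn_ge0.
  have -> : Z.succ n = 0%Z by lia.
  have -> : Z.to_nat (- n) = 1 by lia.
  by rewrite /= gK.
have -> : Z.to_nat (- n) = (Z.to_nat (- Z.succ n)).+1 by lia.
by rewrite iterS gK.
Qed.

Lemma iterz_pred n x : iterz (Z.pred n) x = g (iterz n x).
Proof. by rewrite -[in RHS](Z.succ_pred n) iterz_succ fK. Qed.

Lemma iterzD n m x : iterz (n + m) x = iterz n (iterz m x).
Proof.
elim/Z.peano_ind: n => [//|n IHn|n IHn].
  by rewrite Z.add_succ_l !iterz_succ IHn.
by rewrite Z.add_pred_l !iterz_pred IHn.
Qed.

Definition same_orbit (x y : T) : Prop := exists n, iterz n x = y.

Lemma same_orbit_refl x : same_orbit x x.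
Proof. by exists 0%Z. Qed.

Lemma same_orbit_sym x y : same_orbit x y -> same_orbit y x.
Proof. by move=> [n <-]; exists (- n)%Z; rewrite -iterzD Z.add_opp_diag_l. Qed.

Lemma same_orbit_trans x y z : same_orbit x y -> same_orbit y z -> same_orbit x z.
Proof. by move=> [n <-] [m <-]; exists (m + n)%Z; rewrite iterzD. Qed.

Lemma same_orbit_eq x y : same_orbit x y -> same_orbit x = same_orbit y.
Proof.
move=> xy; apply: functional_extensionality => z; apply: propositional_extensionality.
by split; [apply: same_orbit_trans (same_orbit_sym xy) | apply: same_orbit_trans xy].
Qed.

Definition orbit_base (x : T) : T := epsilon (inhabits x) (same_orbit x).

Lemma orbit_baseP x : same_orbit x (orbit_base x).
Proof. exact: (epsilon_spec (inhabits x) (same_orbit x) (ex_intro _ x (same_orbit_refl x))). Qed.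

Lemma orbit_base_eq x y : same_orbit x y -> orbit_base x = orbit_base y.
Proof.
move=> xy; rewrite /orbit_base (same_orbit_eq xy).
by rewrite (proof_irrelevance _ (inhabits x) (inhabits y)).
Qed.

Definition orbit_index (x : T) : Z :=
  epsilon (inhabits 0%Z) (fun n => iterz n (orbit_base x) = x).

Lemma orbit_indexP x : iterz (orbit_index x) (orbit_base x) = x.
Proof.
have [n nP] := same_orbit_sym (orbit_baseP x).
exact: (epsilon_spec (inhabits 0%Z) (fun n => iterz n (orbit_base x) = x) (ex_intro _ n nP)).
Qed.

Definition orbit_reflection (x : T) : T := iterz (- orbit_index x) (orbit_base x).

Lemma orbit_reflectionE x n :
  iterz n (orbit_base x) = x -> orbit_reflection x = iterz (- n) (orbit_base x).
Proof.
move=> nP; rewrite /orbit_reflection.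
set c := orbit_base x; set k := orbit_index x.
have kP : iterz k c = x by exact: orbit_indexP.
have -> : (- n = - n - k + k)%Z by lia.
rewrite iterzD kP -{1}nP -iterzD.
by congr iterz; lia.
Qed.

Lemma orbit_reflection_f x : orbit_reflection (f x) = g (orbit_reflection x).
Proof.
have base_fx : orbit_base (f x) = orbit_base x.
  by apply/esym/orbit_base_eq; exists 1%Z.
have fxP : iterz (Z.succ (orbit_index x)) (orbit_base (f x)) = f x.
  by rewrite base_fx iterz_succ orbit_indexP.
rewrite (orbit_reflectionE fxP) base_fx /orbit_reflection -iterz_pred.
by congr iterz; lia.
Qed.

Lemma orbit_reflectionK : involutive orbit_reflection.
Proof.
move=> x; have x_rx : same_orbit x (orbit_reflection x).
  by apply: same_orbit_trans (orbit_baseP x) _; exists (- orbit_index x)%Z.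
have base_rx := orbit_base_eq x_rx.
have rxP : iterz (- orbit_index x) (orbit_base (orbit_reflection x)) = orbit_reflection x.
  by rewrite -base_rx.
by rewrite (orbit_reflectionE rxP) -base_rx Z.opp_involutive orbit_indexP.
Qed.

Lemma inv_conj_orbit_reflection :
  g = orbit_reflection \o f \o orbit_reflection.
Proof.
apply: functional_extensionality => x /=.
by rewrite orbit_reflection_f orbit_reflectionK.
Qed.

End OrbitReflection.

Lemma normal_set_inv (T : Type) (M : (T -> T) -> Prop) (f g : T -> T) :
  normal_set M -> M f -> cancel f g -> cancel g f -> M g.
Proof.
move=> normM Mf fK gK; rewrite (inv_conj_orbit_reflection fK gK).
have reflK := orbit_reflectionK fK gK.
exact: (normM _ _ reflK reflK f Mf).
Qed.

Theorem mainTheorem2 (T : Type) (hT : countably_infinite T)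
  (M : (T -> T) -> Prop) (hM : submonoid_Inj M) (hN : normal_set M) :
  normal_subgroup_Sym (fun f => M f /\ bijective f).
Proof.
case: hM => _ Mid Mcomp; split.
- by move=> f [].
- by split=> //; exists id.
- by move=> f h [Mf bf] [Mh bh]; split; [exact: Mcomp | exact: bij_comp].
- move=> f h [Mf _] fK hK; split; first exact: normal_set_inv Mf fK hK.
  exact: Bijective hK fK.
- move=> a b aK bK f [Mf bf]; split; first exact: hN.
  by apply: bij_comp; [apply: bij_comp => //; exists b | exists a].
Qed.
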